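(* Let $R$ be a unital associative ring, $n=3$, and let $\Omega$ be $\Phi^k$ or $\Psi^k$ for some integer $k$. For $$A=\begin{pmatrix}1&1&1\\1&a&b\\1&c&d\end{pmatrix}\in{\rm dom}(\Omega)\quad\text{write}\quad \Omega(A)=\begin{pmatrix}1&1&1\\1&\alpha&\beta\\1&\gamma&\delta\end{pmatrix},$$ so that $\alpha,\beta,\gamma,\delta$ are functions of $(a,b,c,d)$, and write $\alpha=f(a,b,c,d)$. Then ${\rm dom}(\Omega)$ is invariant under the permutations $(a,b,c,d)\mapsto(b,a,d,c)$, $(c,d,a,b)$, $(d,c,b,a)$ of the entries, and $$\beta=f(b,a,d,c),\quad\gamma=f(c,d,a,b),\quad\delta=f(d,c,b,a).$$
   Context: $R^*$: units of $R$. $M_3^*(R)$: invertible $3\times3$ matrices; $M_3^\star(R)$: matrices with all entries in $R^*$. $J_1(M)=M^{-1}$ on $M_3^*(R)$; $J_2(M)_{jk}=(M_{kj})^{-1}$ on $M_3^\star(R)$; $J=J_2\circ J_1$, $J^{-1}=J_1\circ J_2$, where $g\circ f$ has domain $\{x\in{\rm dom}(f):f(x)\in{\rm dom}(g)\}$. $\widehat M_3(R)$: matrices whose first row and column consist of $1$'s. For $A=\{a_{j,k}\}\in M_3^\star(R)$: $\Lambda^L(A)_{j,k}=a_{1,1}a_{j,1}^{-1}a_{j,k}a_{1,k}^{-1}$, $\Lambda^R(A)_{j,k}=a_{j,1}^{-1}a_{j,k}a_{1,k}^{-1}a_{1,1}$. $\Phi(A)=J_2(\Lambda^L(A^{-1}))$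 with ${\rm dom}(\Phi)={\rm dom}(J)\cap\widehat M_3(R)\cap M_3^\star(R)$; its inverse is $\Phi^{-1}(A)=\Lambda^R(J^{-1}(A))$ with domain $\widehat M_3(R)\cap\{M\in{\rm dom}(J^{-1}):J^{-1}(M)\in M_3^\star(R)\}$. $\Psi=J_2\circ\Phi\circ J_2$, with inverse $J_2\circ\Phi^{-1}\circ J_2$. Integer powers are iterated compositions (negative powers using the inverse maps) with natural domains. *)

(* R : unitRingType (unital associative, possibly noncommutative ring
   with its units R^* and inverse x^-1). Partial maps are modelled as T -> option T. *)
From HB Require Import structures.
From mathcomp Require Import all_boot all_algebra.
From Stdlib Require Import ClassicalEpsilon.
Set Implicit Arguments. Unset Strict Implicit. Unset Printing Implicit Defensive.
Import GRing.Theory.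
Local Open Scope ring_scope.

Section Defs.
Variable R : unitRingType.
Notation M := 'M[R]_3.

Definition pcomp (g f : M -> option M) : M -> option M :=
  fun x => match f x with Some y => g y | None => None end.
Fixpoint piter (n : nat) (f : M -> option M) : M -> option M :=
  match n with O => @Some M | S m => pcomp f (piter m f) end.
Definition ipow (f finv : M -> option M) (k : int) : M -> option M :=
  match k with Posz n => piter n f | Negz n => piter n.+1 finv end.

Definition invertible (A : M) : Prop := exists B : M, A *m B = 1%:M /\ B *m A = 1%:M.

Definition J1 (A : M) : option M :=
  match excluded_middle_informative (invertible A) with
  | left H => Some (proj1_sig (constructive_indefinite_description _ H))
  | right _ => None
  end.

Definition allunits (A : M) : bool := [forall i, [forall j, A i j \is a GRing.unit]].

Definition J2 (A : M) : option M :=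
  if allunits A then Some (\matrix_(j, k) (A k j)^-1) else None.

Definition J : M -> option M := pcomp J2 J1.
Definition Jinv : M -> option M := pcomp J1 J2.

Definition hat (A : M) : bool := [forall i, (A i 0 == 1) && (A 0 i == 1)].

Definition LamL (A : M) : M :=
  \matrix_(j, k) (A 0 0 * (A j 0)^-1 * A j k * (A 0 k)^-1).
Definition LamR (A : M) : M :=
  \matrix_(j, k) ((A j 0)^-1 * A j k * (A 0 k)^-1 * A 0 0).

Definition Phi (A : M) : option M :=
  if [&& isSome (J A), hat A & allunits A] then
    match J1 A with Some B => J2 (LamL B) | None => None end
  else None.

Definition PhiInv (A : M) : option M :=
  if hat A then
    match Jinv A with Some B => if allunits B then Some (LamR B) else None | None => None end
  else None.

Definition Psi : M -> option M := pcomp J2 (pcomp Phi J2).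
Definition PsiInv : M -> option M := pcomp J2 (pcomp PhiInv J2).

Definition mk (a b c d : R) : M :=
  \matrix_(i, j)
    match nat_of_ord i, nat_of_ord j with
    | 1, 1 => a | 1, 2 => b | 2, 1 => c | 2, 2 => d | _, _ => 1 end.

End Defs.

Definition i1 : 'I_3 := @Ordinal 3 1 isT.
Definition i2 : 'I_3 := @Ordinal 3 2 isT.

From Pilot Require Import Defs.
From mathcomp Require Import all_boot all_algebra fingroup perm.
From Stdlib Require Import ClassicalEpsilon.
Set Implicit Arguments. Unset Strict Implicit. Unset Printing Implicit Defensive.
Import GRing.Theory.
Local Open Scope ring_scope.

(* Permuting the rows of a matrix by s and its columns by t, where s and t fix
   the index 0, preserves the hat condition and commutes with Lambda^L and
   Lambda^R; inversion J1 and entrywise inversion-transposition J2 intertwine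
   it with the permutation (t, s).  Each of J, Phi, Psi and their inverses
   applies J1 and J2 an even number of times in total, so it commutes with the
   permutation (s, t) itself, and so do all its iterates.  The symmetries of
   (a, b, c, d) in question swap the last two columns, the last two rows, or
   both, of [[1,1,1],[1,a,b],[1,c,d]]. *)

Section PartialMaps.
Variable R : unitRingType.
Implicit Types (F G : 'M[R]_3 -> option 'M[R]_3) (h : 'M[R]_3 -> 'M[R]_3).

Lemma pcomp_morph F G (h1 h2 h3 : 'M[R]_3 -> 'M[R]_3) :
  {morph F : A / h1 A >-> omap h2 A} -> {morph G : A / h2 A >-> omap h3 A} ->
  {morph Defs.pcomp G F : A / h1 A >-> omap h3 A}.
Proof. by move=> hF hG A; rewrite /Defs.pcomp hF; case: (F A). Qed.

Lemma piter_morph F h n :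
  {morph F : A / h A >-> omap h A} -> {morph piter n F : A / h A >-> omap h A}.
Proof. by move=> hF; elim: n => [|n IHn] //=; apply: pcomp_morph. Qed.

Lemma ipow_morph F G h k :
  {morph F : A / h A >-> omap h A} -> {morph G : A / h A >-> omap h A} ->
  {morph ipow F G k : A / h A >-> omap h A}.
Proof. by case: k => n hF hG; apply: piter_morph. Qed.

Definition preserves (P : pred 'M[R]_3) F :=
  forall A B, P A -> F A = Some B -> P B.

Lemma piter_preserves P F n : preserves P F -> preserves P (piter n F).
Proof.
move=> hF; elim: n => [|n IHn] A B PA /=; first by case=> <-.
rewrite /Defs.pcomp; case E: (piter n F A) => [C|] //.
exact: hF (IHn _ _ PA E).
Qed.

Lemma ipow_preserves P F G k :
  preserves P F -> preserves P G -> preserves P (ipow F G k).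
Proof. by case: k => n hF hG; apply: piter_preserves. Qed.

End PartialMaps.

Section RowColPerm.
Variable R : unitRingType.
Implicit Types (A B : 'M[R]_3) (s t u : 'S_3).

Definition row_col_perm s t A : 'M[R]_3 := row_perm s (col_perm t A).

Lemma row_col_permE s t A i j : row_col_perm s t A i j = A (s i) (t j).
Proof. by rewrite !mxE. Qed.

Lemma row_col_permM s t u A B :
  row_col_perm s t A *m row_col_perm t u B = row_col_perm s u (A *m B).
Proof.
rewrite /row_col_perm !col_permE !row_permE !mulmxA.
by rewrite -(mulmxA _ (perm_mx t^-1%g)) -perm_mxM mulVg perm_mx1 mulmx1.
Qed.

Lemma row_col_perm1 s : row_col_perm s s 1%:M = 1%:M.
Proof.
by rewrite /row_col_perm col_permE row_permE mul1mx -perm_mxM mulgV perm_mx1.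
Qed.

Lemma row_col_permK s t A : row_col_perm s^-1 t^-1 (row_col_perm s t A) = A.
Proof. by apply/matrixP => i j; rewrite !row_col_permE !permKV. Qed.

Lemma invertible_row_col_perm s t A :
  invertible A -> invertible (row_col_perm s t A).
Proof.
move=> [B [AB BA]]; exists (row_col_perm t s B).
by rewrite !row_col_permM AB BA !row_col_perm1.
Qed.

Lemma J1_some A B : A *m B = 1%:M -> B *m A = 1%:M -> J1 A = Some B.
Proof.
move=> AB BA; rewrite /J1; case: excluded_middle_informative => [invA|];
  last by case; exists B.
case: (constructive_indefinite_description _ invA) => C [AC CA] /=.
by rewrite -[C]mulmx1 -AB mulmxA CA mul1mx.
Qed.

Lemma J1_none A : ~ invertible A -> J1 A = None.
Proof. by move=> invA; rewrite /J1; case: excluded_middle_informative. Qed.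

Lemma J1_inverse A B : J1 A = Some B -> A *m B = 1%:M /\ B *m A = 1%:M.
Proof.
rewrite /J1; case: excluded_middle_informative => // invA.
by case: (constructive_indefinite_description _ invA) => C [AC CA] [<-].
Qed.

Lemma J1_row_col_perm s t :
  {morph @J1 R : A / row_col_perm s t A >-> omap (row_col_perm t s) A}.
Proof.
move=> A; case E: (J1 A) => [B|] /=.
  have [AB BA] := J1_inverse E.
  by apply: J1_some; rewrite row_col_permM ?AB ?BA row_col_perm1.
apply: J1_none => /(invertible_row_col_perm s^-1 t^-1).
rewrite row_col_permK => -[B [AB BA]].
by rewrite (J1_some AB BA) in E.
Qed.

Lemma allunitsP A : reflect (forall i j, A i j \is a GRing.unit) (allunits A).
Proof.
apply: (iffP forallP) => [H i j | H i]; first by have /forallP := H i.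
by apply/forallP.
Qed.

Lemma allunits_row_col_perm s t A :
  allunits (row_col_perm s t A) = allunits A.
Proof.
apply/allunitsP/allunitsP => H i j; last by rewrite row_col_permE.
by have := H (s^-1 i)%g (t^-1 j)%g; rewrite row_col_permE !permKV.
Qed.

Lemma isSome_J2 A : isSome (J2 A) = allunits A.
Proof. by rewrite /J2; case: allunits. Qed.

Lemma J2_row_col_perm s t :
  {morph @J2 R : A / row_col_perm s t A >-> omap (row_col_perm t s) A}.
Proof.
move=> A; rewrite /J2 allunits_row_col_perm; case: allunits => //=.
by congr Some; apply/matrixP => i j; rewrite !mxE.
Qed.

Lemma hatP A : reflect (forall i, A i 0 = 1 /\ A 0 i = 1) (hat A).
Proof.
apply: (iffP forallP) => H i; last by case: (H i) => -> ->; rewrite !eqxx.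
by case/andP: (H i) => /eqP -> /eqP ->.
Qed.

Section FixingZero.
Variables s t : 'S_3.
Hypotheses (s0 : s 0 = 0) (t0 : t 0 = 0).

Lemma hat_row_col_perm A : hat (row_col_perm s t A) = hat A.
Proof.
apply/hatP/hatP => H i.
  have [+ _] := H (s^-1 i)%g; have [_ +] := H (t^-1 i)%g.
  by rewrite !row_col_permE !permKV s0 t0 => -> ->.
by rewrite !row_col_permE s0 t0; split; [apply: (H _).1 | apply: (H _).2].
Qed.

Lemma LamL_row_col_perm A : LamL (row_col_perm s t A) = row_col_perm s t (LamL A).
Proof. by apply/matrixP => i j; rewrite !mxE s0 t0. Qed.

Lemma LamR_row_col_perm A : LamR (row_col_perm s t A) = row_col_perm s t (LamR A).
Proof. by apply/matrixP => i j; rewrite !mxE s0 t0. Qed.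

End FixingZero.

Lemma J_row_col_perm s t :
  {morph @J R : A / row_col_perm s t A >-> omap (row_col_perm s t) A}.
Proof. exact: pcomp_morph (J1_row_col_perm s t) (J2_row_col_perm t s). Qed.

Lemma Jinv_row_col_perm s t :
  {morph @Jinv R : A / row_col_perm s t A >-> omap (row_col_perm s t) A}.
Proof. exact: pcomp_morph (J2_row_col_perm s t) (J1_row_col_perm t s). Qed.

Lemma Phi_row_col_perm s t : s 0 = 0 -> t 0 = 0 ->
  {morph @Phi R : A / row_col_perm s t A >-> omap (row_col_perm s t) A}.
Proof.
move=> s0 t0 A.
rewrite /Phi J_row_col_perm hat_row_col_perm // allunits_row_col_perm.
case: (J A) => //=; case: hat => //; case: allunits => //=.
rewrite J1_row_col_perm; case: (J1 A) => //= B.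
by rewrite LamL_row_col_perm // J2_row_col_perm.
Qed.

Lemma PhiInv_row_col_perm s t : s 0 = 0 -> t 0 = 0 ->
  {morph @PhiInv R : A / row_col_perm s t A >-> omap (row_col_perm s t) A}.
Proof.
move=> s0 t0 A; rewrite /PhiInv hat_row_col_perm //; case: hat => //.
rewrite Jinv_row_col_perm; case: (Jinv A) => //= B.
by rewrite allunits_row_col_perm; case: allunits; rewrite //= LamR_row_col_perm.
Qed.

Lemma Psi_row_col_perm s t : s 0 = 0 -> t 0 = 0 ->
  {morph @Psi R : A / row_col_perm s t A >-> omap (row_col_perm s t) A}.
Proof.
move=> s0 t0; apply: pcomp_morph (J2_row_col_perm t s).
exact: pcomp_morph (J2_row_col_perm s t) (Phi_row_col_perm t0 s0).
Qed.

Lemma PsiInv_row_col_perm s t : s 0 = 0 -> t 0 = 0 ->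
  {morph @PsiInv R : A / row_col_perm s t A >-> omap (row_col_perm s t) A}.
Proof.
move=> s0 t0; apply: pcomp_morph (J2_row_col_perm t s).
exact: pcomp_morph (J2_row_col_perm s t) (PhiInv_row_col_perm t0 s0).
Qed.

Lemma hat_J2 A B : hat A -> J2 A = Some B -> hat B.
Proof.
move=> /hatP hA; rewrite /J2; case: allunits => // -[<-]; apply/hatP => i.
by rewrite !mxE; case: (hA i) => -> ->; rewrite invr1.
Qed.

Lemma hat_LamL A : allunits A -> hat (LamL A).
Proof.
move=> /allunitsP U; apply/hatP => i; rewrite !mxE; split.
  by rewrite -(mulrA _ _ (A i 0)) mulVr // mulr1 mulrV.
by rewrite mulrV // mul1r mulrV.
Qed.

Lemma hat_LamR A : allunits A -> hat (LamR A).
Proof.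
move=> /allunitsP U; apply/hatP => i; rewrite !mxE; split.
  by rewrite mulVr // mul1r mulVr.
by rewrite -(mulrA _ (A 0 i)) mulrV // mulr1 mulVr.
Qed.

Lemma hat_Phi A B : Phi A = Some B -> hat B.
Proof.
rewrite /Phi /J /Defs.pcomp; case: (J1 A) => [C|] //=.
by case: ifP => // /andP[+ _]; rewrite isSome_J2 => /hat_LamL/hat_J2; apply.
Qed.

Lemma hat_PhiInv A B : PhiInv A = Some B -> hat B.
Proof.
rewrite /PhiInv; case: hat => //; case: (Jinv A) => // C.
by case E: allunits => // -[<-]; apply: hat_LamR.
Qed.

Lemma hat_Psi A B : Psi A = Some B -> hat B.
Proof.
rewrite /Psi /Defs.pcomp; case: (J2 A) => // C.
by case E: (Phi C) => [D|] //; apply: hat_J2 (hat_Phi E).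
Qed.

Lemma hat_PsiInv A B : PsiInv A = Some B -> hat B.
Proof.
rewrite /PsiInv /Defs.pcomp; case: (J2 A) => // C.
by case E: (PhiInv C) => [D|] //; apply: hat_J2 (hat_PhiInv E).
Qed.

End RowColPerm.

Definition swap12 : 'S_3 := tperm i1 i2.

Lemma swap12_0 : swap12 0 = 0.
Proof. by rewrite tpermD. Qed.

Section Mk.
Variables (R : unitRingType) (a b c d : R).

Lemma hat_mk : hat (mk a b c d).
Proof. by apply/forallP => -[[|[|[|?]]] ?]; rewrite !mxE /= eqxx. Qed.

Lemma mk_swap_cols : mk b a d c = row_col_perm 1 swap12 (mk a b c d).
Proof.
apply/matrixP => i j; rewrite row_col_permE perm1 !mxE !permE /=.
by case: i => [[|[|[|?]]] ?]; case: j => [[|[|[|?]]] ?].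
Qed.

Lemma mk_swap_rows : mk c d a b = row_col_perm swap12 1 (mk a b c d).
Proof.
apply/matrixP => i j; rewrite row_col_permE perm1 !mxE !permE /=.
by case: i => [[|[|[|?]]] ?]; case: j => [[|[|[|?]]] ?].
Qed.

Lemma mk_swap_both : mk d c b a = row_col_perm swap12 swap12 (mk a b c d).
Proof.
apply/matrixP => i j; rewrite row_col_permE !mxE !permE /=.
by case: i => [[|[|[|?]]] ?]; case: j => [[|[|[|?]]] ?].
Qed.

End Mk.

Theorem corollary1 (R : unitRingType) (Omega : 'M[R]_3 -> option 'M[R]_3)
  (HOmega : exists k : int,
     Omega = ipow (@Phi R) (@PhiInv R) k \/ Omega = ipow (@Psi R) (@PsiInv R) k) :
  (forall a b c d : R,
     (isSome (Omega (mk a b c d)) -> isSome (Omega (mk b a d c))) /\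
     (isSome (Omega (mk a b c d)) -> isSome (Omega (mk c d a b))) /\
     (isSome (Omega (mk a b c d)) -> isSome (Omega (mk d c b a)))) /\
  (forall (a b c d : R) (B : 'M[R]_3), Omega (mk a b c d) = Some B ->
     hat B /\
     exists B1 B2 B3 : 'M[R]_3,
       [/\ Omega (mk b a d c) = Some B1, Omega (mk c d a b) = Some B2
          & Omega (mk d c b a) = Some B3] /\
       [/\ B i1 i2 = B1 i1 i1, B i2 i1 = B2 i1 i1 & B i2 i2 = B3 i1 i1]).
Proof.
have [Omega_perm Omega_hat] : (forall s t : 'S_3, s 0 = 0 -> t 0 = 0 ->
    {morph Omega : A / row_col_perm s t A >-> omap (row_col_perm s t) A})
  /\ preserves (@hat R) Omega.
  case: HOmega => k [->|->]; split=> [s t s0 t0|].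
  - exact: ipow_morph (Phi_row_col_perm s0 t0) (PhiInv_row_col_perm s0 t0).
  - by apply: ipow_preserves => A B _; [apply: hat_Phi | apply: hat_PhiInv].
  - exact: ipow_morph (Psi_row_col_perm s0 t0) (PsiInv_row_col_perm s0 t0).
  - by apply: ipow_preserves => A B _; [apply: hat_Psi | apply: hat_PsiInv].
have perm1_0 : (1%g : 'S_3) 0 = 0 by rewrite perm1.
split=> [a b c d | a b c d B OmegaB].
  rewrite (mk_swap_cols a) (mk_swap_rows a) (mk_swap_both a).
  rewrite !Omega_perm ?swap12_0 //.
  by case: (Omega _).
split; first exact: Omega_hat (hat_mk a b c d) OmegaB.
exists (row_col_perm 1 swap12 B), (row_col_perm swap12 1 B),
  (row_col_perm swap12 swap12 B).
rewrite (mk_swap_cols a) (mk_swap_rows a) (mk_swap_both a).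
rewrite !Omega_perm ?swap12_0 // OmegaB.
by split; rewrite // !row_col_permE perm1 /swap12 tpermL.
Qed.
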